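(* Let $X$ be a separated metric compact Hausdorff space. Consider the assignments $\mathrm{Quot}(X)\to\mathrm{Subm}(X)$, $(f\colon X\twoheadrightarrow Y)\mapsto\kappa_f$, and $\mathrm{Subm}(X)\to\mathrm{Quot}(X)$, $\gamma\mapsto(p_\gamma\colon X\twoheadrightarrow X/{\sim_\gamma})$. These form a dual equivalence between the preordered class $\mathrm{Quot}(X)$ and the poset $\mathrm{Subm}(X)$: both are order-reversing, for all $f\in\mathrm{Quot}(X)$ and $\gamma\in\mathrm{Subm}(X)$ one has $\kappa_f\le\gamma$ iff $p_\gamma\le f$, $\kappa_{p_\gamma}=\gamma$, and $p_{\kappa_f}$ is isomorphic to $f$ (i.e. $p_{\kappa_f}\le f\le p_{\kappa_f}$). Consequently the poset $\tilde{\mathbf{Q}}(X)$ of quotient objects of $X$ is dually isomorphic to $\mathrm{Subm}(X)$.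
   Context: A metric on a set $X$ is a map $d\colon X\times X\to[0,\infty]$ with $d(x,x)=0$ and $d(x,z)\le d(x,y)+d(y,z)$ (not necessarily symmetric, $\infty$ allowed); separated means $d(x,y)=0=d(y,x)$ implies $x=y$. The upper topology on $[0,\infty]$ has as nonempty proper open sets the sets $]u,\infty]$. A separated metric compact Hausdorff space is a compact Hausdorff space with a separated metric continuous $X\times X\to[0,\infty]$ for the upper topology; $\mathbf{MetCH_{sep}}$ is the category of these with continuous non-expansive maps. $\mathrm{Quot}(X)$ is the class of surjective morphisms of $\mathbf{MetCH_{sep}}$ with domain $X$, preordered by $f\le g$ iff there is a morphism $h$ with $h\circ f=g$; $\tilde{\mathbf{Q}}(X)$ is the poset obtained by identifying $f,g$ with $f\le g\le f$. For $f\colon X\to Y$, the kernel metric is $\kappa_f(x_1,x_2)=d_Y(f(x_1),f(x_2))$. $\mathrm{Subm}(X)$ is the set of continuous submetrics on $X$: (not necessarily separated) metrics $\gamma$ on $X$ continuous $X\times X\to[0,\infty]$ for the upper topology with $\gamma\le d$ pointwise, ordered pointwise. For $\gamma\in\mathrm{Subm}(X)$, $x\sim_\gamma y$ iff $\gamma(x,y)=\gamma(y,x)=0$; $X/{\sim_\gamma}$ carries the quotient topology and the metric $([x],[y])\mapsto\gamma(x,y)$, and $p_\gamma\colon X\to X/{\sim_\gamma}$ is the projection, a surjective morphism of $\mathbf{MetCH_{sep}}$. *)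

From HB Require Import structures.
From mathcomp Require Import all_boot all_order all_algebra.
From mathcomp Require Import all_classical all_reals all_analysis.
Set Implicit Arguments.
Unset Strict Implicit.
Unset Printing Implicit Defensive.
Import Order.TTheory GRing.Theory Num.Theory.

Local Open Scope classical_set_scope.
Local Open Scope ereal_scope.

Section MetCH.
Variable R : realType.

Definition emetric (T : Type) (d : T -> T -> \bar R) : Prop :=
  [/\ forall x y, 0 <= d x y,
      forall x, d x x = 0
    & forall x y z, d x z <= d x y + d y z].

Definition separated (T : Type) (d : T -> T -> \bar R) : Prop :=
  forall x y, d x y = 0 -> d y x = 0 -> x = y.

(* continuity of d : T * T -> [0,+oo] for the upper topology, whose
   nonempty proper open sets are ]u, +oo] (0 <= u < +oo); u = +oo gives the
   empty set, and the whole space has preimage setT. *)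
Definition upper_continuous (T : topologicalType) (d : T -> T -> \bar R) : Prop :=
  forall u : \bar R, 0 <= u -> open [set p : T * T | u < d p.1 p.2].

Record metCH_sep (T : topologicalType) (d : T -> T -> \bar R) : Prop := MetCHSep {
  mc_compact : compact [set: T];
  mc_hausdorff : hausdorff_space T;
  mc_metric : emetric d;
  mc_separated : separated d;
  mc_cont : upper_continuous d }.

Definition morphism (T U : topologicalType) (dT : T -> T -> \bar R)
  (dU : U -> U -> \bar R) (f : T -> U) : Prop :=
  continuous f /\ forall x y, dU (f x) (f y) <= dT x y.

Record is_quot (X Y : topologicalType) (dX : X -> X -> \bar R)
  (dY : Y -> Y -> \bar R) (f : X -> Y) : Prop := IsQuot {
  q_space : metCH_sep dY;
  q_morphism : morphism dX dY f;
  q_surjective : forall y, exists x, f x = y }.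

Definition quot_le (X Y Z : topologicalType) (dY : Y -> Y -> \bar R)
  (dZ : Z -> Z -> \bar R) (f : X -> Y) (g : X -> Z) : Prop :=
  exists h : Y -> Z, morphism dY dZ h /\ h \o f = g.

Definition kernel_metric (X Y : Type) (dY : Y -> Y -> \bar R) (f : X -> Y) :
  X -> X -> \bar R := fun x1 x2 => dY (f x1) (f x2).

Record is_subm (X : topologicalType) (dX : X -> X -> \bar R)
  (g : X -> X -> \bar R) : Prop := IsSubm {
  sm_metric : emetric g;
  sm_cont : upper_continuous g;
  sm_le : forall x y, g x y <= dX x y }.

Definition subm_le (X : Type) (g1 g2 : X -> X -> \bar R) : Prop :=
  forall x y, g1 x y <= g2 x y.

Lemma kernel_emetric (X Y : Type) (dY : Y -> Y -> \bar R) (f : X -> Y) :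
  emetric dY -> emetric (kernel_metric dY f).
Proof. by case=> h0 h1 h2; split=> *; rewrite /kernel_metric. Qed.

Definition subm_rel (X : Type) (g : X -> X -> \bar R) : rel X :=
  fun x y => `[< g x y = 0 /\ g y x = 0 >].

Lemma subm_rel_equiv (X : Type) (g : X -> X -> \bar R) (hg : emetric g) :
  equiv_class_of (subm_rel g).
Proof.
case: hg => h0 h1 h2; split.
- by move=> x; apply/asboolP; rewrite h1.
- by move=> x y; apply/asboolP/asboolP => -[].
- move=> y x z /asboolP [xy yx] /asboolP [yz zy]; apply/asboolP; split.
  + apply/eqP; rewrite eq_le h0 andbT; have := h2 x y z.
    by rewrite xy yz adde0.
  + apply/eqP; rewrite eq_le h0 andbT; have := h2 z y x.
    by rewrite zy yx adde0.
Qed.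

Definition subm_equiv (X : Type) (g : X -> X -> \bar R) (hg : emetric g) :
  equiv_rel X := EquivRelPack (subm_rel_equiv hg).

Local Open Scope quotient_scope.

Definition quot_space (X : topologicalType) (g : X -> X -> \bar R)
  (hg : emetric g) : topologicalType :=
  quotient_topology {eq_quot (subm_equiv hg)}.

Definition quot_proj (X : topologicalType) (g : X -> X -> \bar R)
  (hg : emetric g) : X -> quot_space hg :=
  \pi_(quotient_topology {eq_quot (subm_equiv hg)}).

Definition quot_metric (X : topologicalType) (g : X -> X -> \bar R)
  (hg : emetric g) : quot_space hg -> quot_space hg -> \bar R :=
  fun a b => g (repr (a : quotient_topology {eq_quot (subm_equiv hg)}))
               (repr (b : quotient_topology {eq_quot (subm_equiv hg)})).

End MetCH.

Arguments quot_metric {R X g} hg.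
Arguments quot_proj {R X g} hg.
Arguments quot_space {R X g} hg.
Arguments kernel_emetric {R X Y dY} f.

(* The relation x ~ y := (g x y = 0 = g y x) of a continuous submetric g is
   closed in X * X, since {0 < g} is open for the upper topology.  On the
   compact Hausdorff space X the ~-saturation of a closed set is then closed,
   being the projection of a compact set; so normality of X separates two
   classes by saturated open sets and X/~ is Hausdorff.  Consequently
   {qd <= u} is closed in (X/~)^2, as the compact image of the compact set
   {g <= u}, i.e. the induced metric qd is upper continuous.
   The order-theoretic part is formal: by separatedness of Y, kappa_f <= g
   makes f constant on ~-classes, so f factors non-expansively through p_g;
   and f <= p_(kappa_f) because a continuous surjection from a compact space
   onto a Hausdorff space is a quotient map. *)

From Pilot Require Import Defs.
From HB Require Import structures.
From mathcomp Require Import all_boot all_order all_algebra.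
From mathcomp Require Import all_classical all_reals all_analysis.
Import Order.TTheory.
Local Open Scope classical_set_scope.
Local Open Scope ereal_scope.
Set Implicit Arguments.
Unset Strict Implicit.

Lemma fst_continuous (T U : topologicalType) : continuous (@fst T U).
Proof. by move=> p; exact: cvg_fst. Qed.

Lemma snd_continuous (T U : topologicalType) : continuous (@snd T U).
Proof. by move=> p; exact: cvg_snd. Qed.

Lemma continuous_pair_map (T U : topologicalType) (f : T -> U) :
  continuous f -> continuous (fun p : (T * T)%type => (f p.1, f p.2)).
Proof.
move=> cf p; apply: (@cvg_pair _ _ _ (nbhs p) (nbhs (f p.1)) (nbhs (f p.2))).
- by apply: continuous_comp; [exact: fst_continuous | exact: cf].
- by apply: continuous_comp; [exact: snd_continuous | exact: cf].
Qed.

Lemma nbhs_setX {T U : topologicalType} {x : T} {y : U} {A : set T}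
    {B : set U} :
  nbhs x A -> nbhs y B -> nbhs (x, y) (A `*` B).
Proof. by move=> nA nB; exists (A, B). Qed.

Lemma prod_hausdorff (T U : topologicalType) :
  hausdorff_space T -> hausdorff_space U -> hausdorff_space (T * U)%type.
Proof.
move=> hT hU [a b] [a' b'] cl; congr pair.
- apply: hT => A A' nA nA'.
  have [[x _] [[/= Ax _] [/= A'x _]]] :=
    cl _ _ (nbhs_setX nA filterT) (nbhs_setX nA' filterT).
  by exists x.
- apply: hU => B B' nB nB'.
  have [[_ y] [[_ /= By] [_ /= B'y]]] :=
    cl _ _ (nbhs_setX filterT nB) (nbhs_setX filterT nB').
  by exists y.
Qed.

Lemma continuous_factor_compact_hausdorff (T U V : topologicalType)
    (f : T -> U) (h : U -> V) :
  compact [set: T] -> hausdorff_space U -> continuous f ->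
  (forall y, exists x, f x = y) -> continuous (h \o f) -> continuous h.
Proof.
move=> cT hU cf fsurj chf; apply/continuous_closedP => C clC.
have -> : h @^-1` C = f @` ((h \o f) @^-1` C).
  apply/seteqP; split => [y Cy | _ [x Cx <-] //].
  by have [x fx] := fsurj y; exists x; rewrite /= ?fx.
apply: compact_closed hU _; apply: continuous_compact.
  exact: continuous_subspaceT.
apply: subclosed_compact cT _ => //.
exact: (continuous_closedP _).1 chf _ clC.
Qed.

Section submetric_relation.
Variables (R : realType) (X : topologicalType) (g : X -> X -> \bar R).
Hypothesis hg : emetric g.

Local Notation "x ~ y" := (subm_rel g x y) (at level 70).

Lemma subm_relP x y : reflect (g x y = 0 /\ g y x = 0) (x ~ y).
Proof. exact: asboolP. Qed.

Lemma subm_rel_refl x : x ~ x.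
Proof. by case: (subm_rel_equiv hg). Qed.

Lemma subm_rel_sym x y : x ~ y -> y ~ x.
Proof. by case/subm_relP => xy yx; apply/subm_relP. Qed.

Lemma subm_rel_trans x y z : x ~ y -> y ~ z -> x ~ z.
Proof. by case: (subm_rel_equiv hg) => _ _ trans xy; apply: trans. Qed.

Lemma subm_rel_metric x x' y y' : x ~ x' -> y ~ y' -> g x y = g x' y'.
Proof.
case: hg => _ _ tri /subm_relP[xx' x'x] /subm_relP[yy' y'y].
apply/eqP; rewrite eq_le; apply/andP; split.
- apply: le_trans (tri x x' y) _; rewrite xx' add0e.
  by apply: le_trans (tri x' y' y) _; rewrite y'y adde0.
- apply: le_trans (tri x' x y') _; rewrite x'x add0e.
  by apply: le_trans (tri x y y') _; rewrite yy' adde0.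
Qed.

Definition subm_saturation (A : set X) : set X :=
  [set y | exists2 x, A x & x ~ y].

Hypothesis ug : upper_continuous g.

Lemma closed_subm_rel : closed [set p : (X * X)%type | p.1 ~ p.2].
Proof.
pose O := [set p : (X * X)%type | 0 < g p.1 p.2].
have oO : open O := ug (lexx 0).
have -> : [set p : (X * X)%type | p.1 ~ p.2] =
    ~` (O `|` (fun p => (p.2, p.1)) @^-1` O).
  have [g0 _ _] := hg.
  have eq0E x y : (g x y == 0) = ~~ (0 < g x y).
    by rewrite lt_def g0 andbT negbK.
  apply/seteqP; split=> [[x y] /subm_relP[xy yx]|[x y] /not_orP[/negP + /negP]].
    by rewrite /O /= xy yx ltxx => -[].
  by rewrite /O /= -!eq0E => /eqP xy /eqP yx; apply/subm_relP.
apply: open_closedC; apply: openU => //.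
by apply: open_comp => // p _; exact: swap_continuous.
Qed.

Hypotheses (cX : compact [set: X]) (hX : hausdorff_space X).

Lemma closed_subm_saturation (C : set X) :
  closed C -> closed (subm_saturation C).
Proof.
move=> clC; pose K := fst @^-1` C `&` [set p : (X * X)%type | p.1 ~ p.2].
have cK : compact K.
  apply: (@subclosed_compact _ _ ([set: X] `*` [set: X])).
  - apply: closedI closed_subm_rel.
    by apply: preimage_closed => // p _; exact: fst_continuous.
  - exact: compact_setX.
  - by rewrite setXTT.
have -> : subm_saturation C = snd @` K.
  apply/seteqP; split => [y [x Cx xy]|_ [[x y] [Cx xy] <-]]; last by exists x.
  by exists (x, y).
apply: compact_closed hX _; apply: continuous_compact cK.
exact/continuous_subspaceT/snd_continuous.
Qed.

Lemma open_subm_saturated_interior (U : set X) :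
  open U -> open [set x | forall y, x ~ y -> U y].
Proof.
move=> oU.
have -> : [set x | forall y, x ~ y -> U y] = ~` subm_saturation (~` U).
  apply/seteqP; split => [x xU [y nUy yx]|x nsat y xy].
    by apply/nUy/xU/subm_rel_sym.
  by apply: contrapT => nUy; apply: nsat; exists y => //; exact: subm_rel_sym.
exact/closed_openC/closed_subm_saturation/open_closedC.
Qed.

End submetric_relation.

Section quotient_space.
Variables (R : realType) (X : topologicalType) (g : X -> X -> \bar R).
Hypothesis hg : emetric g.

Local Notation "x ~ y" := (subm_rel g x y) (at level 70).
Local Notation Q := (quot_space hg).
Local Notation pi := (quot_proj hg).
Local Notation qd := (quot_metric hg).

Lemma quot_proj_eqP x y : reflect (pi x = pi y) (x ~ y).
Proof. exact: eqquotP. Qed.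

Lemma quot_projK (a : Q) : pi (repr a) = a.
Proof. exact: reprK. Qed.

Lemma quot_proj_surjective (a : Q) : exists x, pi x = a.
Proof. by exists (repr a); exact: quot_projK. Qed.

Lemma quot_proj_continuous : continuous pi.
Proof. exact: pi_continuous. Qed.

Lemma quot_metric_proj x y : qd (pi x) (pi y) = g x y.
Proof.
rewrite /quot_metric; apply: (subm_rel_metric hg);
  by apply/quot_proj_eqP; rewrite quot_projK.
Qed.

Lemma quot_metric_emetric : emetric qd.
Proof. by have [g0 g1 g2] := hg; split=> *; rewrite /quot_metric. Qed.

Lemma quot_metric_separated : Defs.separated qd.
Proof.
move=> a b ab ba; rewrite -[a]quot_projK -[b]quot_projK.
exact/quot_proj_eqP/subm_relP.
Qed.

Lemma open_quot_saturated (A : set X) :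
  open A -> (forall x y, A x -> x ~ y -> A y) -> open [set a : Q | A (repr a)].
Proof.
move=> oA satA; rewrite /open /= /quotient_open.
have -> : pi @^-1` [set a : Q | A (repr a)] = A => //.
apply/seteqP; split => x /=.
  by move/satA; apply; apply/quot_proj_eqP; rewrite quot_projK.
by move/satA; apply; apply/subm_rel_sym/quot_proj_eqP; rewrite quot_projK.
Qed.

Hypothesis cX : compact [set: X].

Lemma quot_space_compact : compact [set: Q].
Proof.
have := continuous_compact (continuous_subspaceT quot_proj_continuous) cX.
congr compact; apply/seteqP; split => // a _.
by have [x <-] := quot_proj_surjective a; exists x.
Qed.

Hypotheses (ug : upper_continuous g) (hX : hausdorff_space X).

Lemma quot_nbhs_of_class_nbhs (U : set X) x :
  open U -> subm_saturation g [set x] `<=` U ->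
  exists2 A : set Q, open A /\ A (pi x) & forall a, A a -> U (repr a).
Proof.
move=> oU xU; pose U' := [set z | forall w, z ~ w -> U w].
exists [set a : Q | U' (repr a)]; last by move=> a /(_ _ (subm_rel_refl hg _)).
split.
- apply: open_quot_saturated; first exact: open_subm_saturated_interior.
  by move=> z z' U'z zz' w z'w; apply/U'z/(subm_rel_trans hg zz').
- move=> w xw; apply: xU; exists x => //; apply: (subm_rel_trans hg _ xw).
  by apply/quot_proj_eqP; rewrite quot_projK.
Qed.

Lemma quot_space_hausdorff : hausdorff_space Q.
Proof.
rewrite open_hausdorff => a b; rewrite -[a]quot_projK -[b]quot_projK.
move: (repr a) (repr b) => {a b} x y /eqP nxy.
have [U [V [oU oV xU yV UV0]]] : exists U V, [/\ open U, open V,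
    subm_saturation g [set x] `<=` U, subm_saturation g [set y] `<=` V &
    U `&` V = set0].
  apply: (@normal_openP R X).1; first exact: compact_normal.
  - apply: (closed_subm_saturation hg ug cX hX).
    by apply: compact_closed => //; exact: compact_set1.
  - apply: (closed_subm_saturation hg ug cX hX).
    by apply: compact_closed => //; exact: compact_set1.
  apply/seteqP; split => // z [[_ -> xz] [_ -> yz]]; apply: nxy.
  by apply/quot_proj_eqP/(subm_rel_trans hg xz)/subm_rel_sym.
have [A [oA Ax] AU] := quot_nbhs_of_class_nbhs oU xU.
have [B [oB By] BV] := quot_nbhs_of_class_nbhs oV yV.
exists (A, B); first by rewrite !inE.
split => //; apply/eqP/seteqP; split => // c [/AU Uc /BV Vc].
by have : (U `&` V) (repr c) by []; rewrite UV0.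
Qed.

Lemma quot_metric_upper_continuous : upper_continuous qd.
Proof.
move=> u u0; pose F := [set p : (X * X)%type | g p.1 p.2 <= u].
have cF : compact F.
  apply: (@subclosed_compact _ _ ([set: X] `*` [set: X])).
  - have -> : F = ~` [set p | u < g p.1 p.2].
      by apply/seteqP; split => p; rewrite /F /= leNgt => /negP.
    exact/open_closedC/ug.
  - exact: compact_setX.
  - by rewrite setXTT.
have -> : [set p : (Q * Q)%type | u < qd p.1 p.2] =
    ~` ((fun p => (pi p.1, pi p.2)) @` F).
  apply/seteqP; split => [[a b] /= uab [[x y] /= Fxy [ax bx]]|[a b] /= nF].
    by move: uab; rewrite -ax -bx quot_metric_proj ltNge Fxy.
  rewrite ltNge; apply/negP => abu; apply: nF.
  by exists (repr a, repr b); rewrite //= !quot_projK.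
apply: closed_openC; apply: compact_closed.
  exact: prod_hausdorff quot_space_hausdorff quot_space_hausdorff.
apply: continuous_compact cF; apply: continuous_subspaceT.
exact/continuous_pair_map/quot_proj_continuous.
Qed.

Lemma quot_metCH_sep : metCH_sep qd.
Proof.
split; [exact: quot_space_compact | exact: quot_space_hausdorff
  | exact: quot_metric_emetric | exact: quot_metric_separated
  | exact: quot_metric_upper_continuous].
Qed.

End quotient_space.

Section quotients_and_submetrics.
Variable R : realType.

Lemma kernel_metric_upper_continuous (X Y : topologicalType)
    (dY : Y -> Y -> \bar R) (f : X -> Y) :
  continuous f -> upper_continuous dY -> upper_continuous (kernel_metric dY f).
Proof.
move=> cf ug u u0.
apply: (@open_comp _ _ (fun p => (f p.1, f p.2)) [set q | u < dY q.1 q.2]).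
  by move=> p _; exact: continuous_pair_map.
exact: ug.
Qed.

Lemma kernel_metric_subm (X Y : topologicalType) (dX : X -> X -> \bar R)
    (dY : Y -> Y -> \bar R) (f : X -> Y) :
  is_quot dX dY f -> is_subm dX (kernel_metric dY f).
Proof.
move=> [hY [cf nf] _]; split => //.
- exact: kernel_emetric f (mc_metric hY).
- exact: kernel_metric_upper_continuous cf (mc_cont hY).
Qed.

Lemma kernel_metric_quot_proj (X : topologicalType) (g : X -> X -> \bar R)
    (hg : emetric g) :
  kernel_metric (quot_metric hg) (quot_proj hg) = g.
Proof. by apply/funext => x; apply/funext => y; exact: quot_metric_proj. Qed.

Lemma quot_proj_quot (X : topologicalType) (dX g : X -> X -> \bar R)
    (hX : metCH_sep dX) (hg : is_subm dX g) :
  is_quot dX (quot_metric (sm_metric hg)) (quot_proj (sm_metric hg)).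
Proof.
split.
- exact: quot_metCH_sep (mc_compact hX) (sm_cont hg) (mc_hausdorff hX).
- split; first exact: quot_proj_continuous.
  by move=> x y; rewrite quot_metric_proj; exact: sm_le.
- exact: quot_proj_surjective.
Qed.

Lemma subm_le_kernel_metric (X Y Z : topologicalType) (dY : Y -> Y -> \bar R)
    (dZ : Z -> Z -> \bar R) (f : X -> Y) (f' : X -> Z) :
  quot_le dY dZ f f' -> subm_le (kernel_metric dZ f') (kernel_metric dY f).
Proof. by move=> [h [[_ hne] <-]] x y; exact: hne. Qed.

Lemma quot_proj_le (X Y : topologicalType) (dX g : X -> X -> \bar R)
    (hg : emetric g) (dY : Y -> Y -> \bar R) (f : X -> Y) :
  is_quot dX dY f -> subm_le (kernel_metric dY f) g ->
  quot_le (quot_metric hg) dY (quot_proj hg) f.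
Proof.
move=> [[_ _ [dY0 _ _] sepY _] [cf _] _] fg.
have f_compat x y : quot_proj hg x = quot_proj hg y -> f x = f y.
  move=> /quot_proj_eqP/subm_relP[xy yx].
  apply: sepY; apply/eqP; rewrite eq_le dY0 andbT.
  - by rewrite -xy; exact: fg.
  - by rewrite -yx; exact: fg.
exists (f \o repr); split; first split.
- by apply: repr_comp_continuous => // x y /eqP /f_compat ->.
- by move=> a b; exact: fg.
by apply/funext => x /=; apply: f_compat; rewrite quot_projK.
Qed.

Lemma quot_le_kernel_quot_proj (X Y : topologicalType)
    (dX : X -> X -> \bar R) (dY : Y -> Y -> \bar R) (f : X -> Y)
    (hk : emetric (kernel_metric dY f)) :
  compact [set: X] -> is_quot dX dY f ->
  quot_le dY (quot_metric hk) f (quot_proj hk).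
Proof.
move=> cX [[_ hY [_ dY0 _] _ _] [cf _] fsurj].
pose s y := projT1 (cid (fsurj y)).
have fs y : f (s y) = y := projT2 (cid (fsurj y)).
have hf : (quot_proj hk \o s) \o f = quot_proj hk.
  apply/funext => x /=; apply/quot_proj_eqP/subm_relP.
  by rewrite /kernel_metric fs dY0.
exists (quot_proj hk \o s); split => //; split.
- apply: (continuous_factor_compact_hausdorff cX hY cf fsurj).
  by rewrite hf; exact: quot_proj_continuous.
- by move=> a b; rewrite /= quot_metric_proj /kernel_metric !fs.
Qed.

End quotients_and_submetrics.

Theorem theorem3p8 (R : realType) (X : topologicalType)
    (dX : X -> X -> \bar R) (hX : metCH_sep dX) :
  (* f |-> kappa_f maps Quot(X) into Subm(X) *)
  (forall (Y : topologicalType) (dY : Y -> Y -> \bar R) (f : X -> Y),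
      is_quot dX dY f -> is_subm dX (kernel_metric dY f)) /\
  (* gamma |-> p_gamma maps Subm(X) into Quot(X) *)
  (forall (g : X -> X -> \bar R) (hg : is_subm dX g),
      is_quot dX (quot_metric (sm_metric hg)) (quot_proj (sm_metric hg))) /\
  (* kappa is order-reversing *)
  (forall (Y Z : topologicalType) (dY : Y -> Y -> \bar R)
          (dZ : Z -> Z -> \bar R) (f : X -> Y) (f' : X -> Z),
      is_quot dX dY f -> is_quot dX dZ f' -> quot_le dY dZ f f' ->
      subm_le (kernel_metric dZ f') (kernel_metric dY f)) /\
  (* p is order-reversing *)
  (forall (g1 g2 : X -> X -> \bar R) (hg1 : is_subm dX g1) (hg2 : is_subm dX g2),
      subm_le g1 g2 ->
      quot_le (quot_metric (sm_metric hg2)) (quot_metric (sm_metric hg1))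
              (quot_proj (sm_metric hg2)) (quot_proj (sm_metric hg1))) /\
  (* kappa_f <= gamma iff p_gamma <= f *)
  (forall (Y : topologicalType) (dY : Y -> Y -> \bar R) (f : X -> Y)
          (g : X -> X -> \bar R),
      is_quot dX dY f -> forall hg : is_subm dX g,
      subm_le (kernel_metric dY f) g <->
      quot_le (quot_metric (sm_metric hg)) dY (quot_proj (sm_metric hg)) f) /\
  (* kappa_{p_gamma} = gamma *)
  (forall (g : X -> X -> \bar R) (hg : is_subm dX g),
      kernel_metric (quot_metric (sm_metric hg)) (quot_proj (sm_metric hg)) = g) /\
  (* p_{kappa_f} is isomorphic to f *)
  (forall (Y : topologicalType) (dY : Y -> Y -> \bar R) (f : X -> Y)
          (hf : is_quot dX dY f),
      let hk := kernel_emetric f (mc_metric (q_space hf)) in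
      quot_le (quot_metric hk) dY (quot_proj hk) f /\
      quot_le dY (quot_metric hk) f (quot_proj hk)).
Proof.
have cX := mc_compact hX.
split; first by move=> Y dY f; apply: kernel_metric_subm.
split; first by move=> g hg; exact: quot_proj_quot.
split; first by move=> Y Z dY dZ f f' _ _; exact: subm_le_kernel_metric.
split.
  move=> g1 g2 hg1 hg2 g12; apply: quot_proj_le (quot_proj_quot hX hg1) _.
  by rewrite kernel_metric_quot_proj.
split.
  move=> Y dY f g hf hg; split; first exact: quot_proj_le hf.
  by move/subm_le_kernel_metric; rewrite kernel_metric_quot_proj.
split; first by move=> g hg; exact: kernel_metric_quot_proj.
move=> Y dY f hf hk; split; first exact: (quot_proj_le _ hf).
exact: (quot_le_kernel_quot_proj _ cX hf).
Qed.
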